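(* Let $\mu$ be a Krull valuation on $\overline{\mathbb{K}}[x]$, let $f\in\overline{\mathbb{K}}[x]$ be non-constant and $a$ an optimizing root of $f$. If $g\in\overline{\mathbb{K}}[x]$ is non-constant with $\delta(g)<\delta(f)$, then $g(a)\neq 0$, $$\mu_{x-a}(g)=\mu(g)=\mu(g(a)),$$ and $\mu_{x-a}(g/g(a))=0$ with residue $\left(g/g(a)\right)\mu_{x-a}=1$ in the residue field of $\mu_{x-a}$ on $\overline{\mathbb{K}}(x)$. Moreover, if $\mathbb{K}\subseteq\overline{\mathbb{K}}$ is a subfield with $\overline{\mathbb{K}}$ its algebraic closure, $Q\in\mathbb{K}[x]$ is a key polynomial for the restriction $\nu=\mu|_{\mathbb{K}[x]}$ and $a$ is an optimizing root of $Q$, then $\mu_{x-a}(Q)=\mu(Q)$.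
   Context: For non-constant $f\in\overline{\mathbb{K}}[x]$, $\delta(f)=\max\{\mu(x-c):f(c)=0\}$, and a root $c$ with $\mu(x-c)=\delta(f)$ is an optimizing root. $\mu_{x-a}$ is the truncation of $\mu$ at $x-a$: $\mu_{x-a}(\sum_i c_i(x-a)^i)=\min_i\{\mu(c_i)+i\mu(x-a)\}$, a valuation on $\overline{\mathbb{K}}[x]$ extended to $\overline{\mathbb{K}}(x)$. Key polynomials: for nonzero $f\in\mathbb{K}[x]$, with Hasse derivatives $\partial_bf=\sum_{i\ge b}\binom{i}{b}a_ix^{i-b}$ for $f=\sum a_ix^i$, $\epsilon(f)=\max_{1\le b\le\deg f}(\nu(f)-\nu(\partial_bf))/b$ if $\deg f>0$ and $\epsilon(f)=-\infty$ if $f$ is constant; a monic $Q$ is a key polynomial for $\nu$ if $\epsilon(f)\ge\epsilon(Q)$ implies $\deg f\ge\deg Q$ for all $f$. *)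

From mathcomp Require Import all_boot all_order all_algebra.
Set Implicit Arguments. Unset Strict Implicit. Unset Printing Implicit Defensive.
Import GRing.Theory.
Local Open Scope ring_scope.

Definition ordered_group (G : zmodType) (le : rel G) : Prop :=
  [/\ reflexive le, antisymmetric le, transitive le, total le &
      forall x y z, le x y -> le (x + z) (y + z)].

Definition glt (G : zmodType) (le : rel G) (x y : G) : bool := le x y && (x != y).

Definition gmin (G : zmodType) (le : rel G) (x y : G) : G := if le x y then x else y.

(* Minimum of a finite list of values (0 on the empty list, never used). *)
Definition gminseq (G : zmodType) (le : rel G) (s : seq G) : G :=
  match s with [::] => 0 | v :: vs => foldl (gmin le) v vs end.

(* mu : {poly F} -> G represents a valuation with values in G \cup {oo},
   with mu(p) = oo iff p = 0 (trivial support); the value of [mu] at 0 is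
   irrelevant and never used. *)
Definition krull_valuation (F : fieldType) (G : zmodType) (le : rel G)
    (mu : {poly F} -> G) : Prop :=
  (forall f g : {poly F}, f != 0 -> g != 0 -> mu (f * g) = mu f + mu g) /\
  (forall f g : {poly F}, f != 0 -> g != 0 -> f + g != 0 ->
      le (mu f) (mu (f + g)) || le (mu g) (mu (f + g))).

Definition is_delta (F : fieldType) (G : zmodType) (le : rel G)
    (mu : {poly F} -> G) (f : {poly F}) (d : G) : Prop :=
  (exists c, root f c /\ mu ('X - c%:P) = d) /\
  (forall c, root f c -> le (mu ('X - c%:P)) d).

Definition optimizing_root (F : fieldType) (G : zmodType) (le : rel G)
    (mu : {poly F} -> G) (f : {poly F}) (a : F) : Prop :=
  root f a /\ is_delta le mu f (mu ('X - a%:P)).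

(* Truncation mu_{x-a}(g) = min_i { mu(c_i) + i mu(x-a) } where
   g = sum_i c_i (x-a)^i, i.e. c_i is the i-th coefficient of g(x + a);
   the minimum ranges over the nonzero c_i (mu(0) = oo). *)
Definition trunc (F : fieldType) (G : zmodType) (le : rel G)
    (mu : {poly F} -> G) (a : F) (g : {poly F}) : G :=
  let h := g \Po ('X + a%:P) in
  gminseq le [seq mu (h`_i)%:P + mu ('X - a%:P) *+ i
             | i <- iota 0 (size h) & h`_i != 0].

(* Comparison eps(f) >= eps(Q) for nonzero f, Q, where
   eps(f) = max_{1<=b<=deg f} (nu(f) - nu(d_b f))/b  (Hasse derivatives
   d_b f = f^`N(b)), eps(f) = -oo for constant f, and terms with d_b f = 0
   are -oo (nu(0) = oo).  The quotients live in the divisible hull of G;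
   A/b >= C/c is expressed as c*A >= b*C (G is torsion free), and
   max_b A_b/b >= max_c C_c/c as: some b dominates every c. *)
Definition eps_ge (F : fieldType) (G : zmodType) (le : rel G)
    (nu : {poly F} -> G) (f Q : {poly F}) : Prop :=
  (size Q <= 1)%N \/
  ((1 < size f)%N /\
   exists b : nat, [/\ (1 <= b <= (size f).-1)%N, f^`N(b) != 0 &
     forall c : nat, (1 <= c <= (size Q).-1)%N -> Q^`N(c) != 0 ->
       le ((nu Q - nu Q^`N(c)) *+ b) ((nu f - nu f^`N(b)) *+ c)]).

Definition key_poly (F : fieldType) (K : {pred F}) (G : zmodType) (le : rel G)
    (nu : {poly F} -> G) (Q : {poly F}) : Prop :=
  Q \is monic /\ Q \is a polyOver K /\
  forall f : {poly F}, f \is a polyOver K -> f != 0 ->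
    eps_ge le nu f Q -> (size Q <= size f)%N.

From mathcomp Require Import all_boot all_order all_algebra.
Import GRing.Theory.
Local Open Scope ring_scope.
Set Implicit Arguments. Unset Strict Implicit. Unset Printing Implicit Defensive.

(* Write m = mu(x - a) and expand p(x) = sum_i h_i (x - a)^i; the
   truncation mu_{x-a}(p) is the minimum of the "terms" mu(h_i) + i m.  Say
   that p is dominant at index i1 with value v when the term at i1 equals v,
   every term is >= v, and every term of index > i1 is > v.
   The core of the file shows: if every root b of p satisfies
   mu(x - b) <= m, then p is dominant with value mu(p), at the index counting
   the roots with mu(x - b) = m.  This is an induction on the factorisation
   p = c * prod (x - b) over the algebraically closed field: multiplying by
   x - b = (x - a) + (a - b) keeps the dominant index when mu(x - b) < m
   (then mu(a - b) = mu(x - b)), and shifts it by one when mu(x - b) = m.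
   Hence mu_{x-a}(p) = mu(p), which gives the statement on Q (all its roots
   satisfy mu(x - c) <= delta(Q) = m).  For g with delta(g) < delta(f) = m
   all roots satisfy mu(x - b) < m, so g is dominant at index 0: g(a) = h_0
   is nonzero, mu(g) = mu(g(a)), and the same holds for g / g(a), whose
   truncation is 0 and whose difference with 1 has only terms > 0. *)

Section OrderedGroup.
Variables (G : zmodType) (le : rel G).
Hypothesis og : ordered_group le.

Lemma gle_refl x : le x x.
Proof. by case: og => refl _ _ _ _; apply: refl. Qed.

Lemma gle_anti x y : le x y -> le y x -> x = y.
Proof. by case: og => _ anti _ _ _ hxy hyx; apply: anti; rewrite hxy hyx. Qed.

Lemma gle_trans y x z : le x y -> le y z -> le x z.
Proof. by case: og => _ _ trans _ _; apply: trans. Qed.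

Lemma gle_total x y : le x y || le y x.
Proof. by case: og => _ _ _ total _; apply: total. Qed.

Lemma gle_addr z x y : le x y -> le (x + z) (y + z).
Proof. by case: og => _ _ _ _ add; apply: add. Qed.

Lemma gle_add x y z w : le x y -> le z w -> le (x + z) (y + w).
Proof.
move=> hxy hzw; apply: (gle_trans (gle_addr z hxy)).
by rewrite ![y + _]addrC; apply: gle_addr.
Qed.

Lemma glt_irr x : glt le x x = false.
Proof. by rewrite /glt eqxx andbF. Qed.

Lemma glt_le x y : glt le x y -> le x y.
Proof. by case/andP. Qed.

Lemma glt_ngle x y : glt le x y -> ~~ le y x.
Proof. by case/andP=> hxy /eqP neq; apply/negP=> hyx; apply: neq; apply: gle_anti. Qed.

Lemma ngle_glt x y : ~~ le y x -> glt le x y.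
Proof.
move=> nyx; rewrite /glt; case/orP: (gle_total x y) => [-> /=|hyx]; last by rewrite hyx in nyx.
by apply: contraNneq nyx => ->; apply: gle_refl.
Qed.

Lemma nglt_gle x y : ~~ glt le x y -> le y x.
Proof. by apply: contraR => /ngle_glt. Qed.

Lemma gle_nglt_eq x y : le x y -> ~~ glt le x y -> x = y.
Proof. by move=> hxy nlt; apply: gle_anti => //; apply: nglt_gle. Qed.

Lemma glt_le_trans y x z : glt le x y -> le y z -> glt le x z.
Proof.
move=> hxy hyz; apply: ngle_glt; apply: contra (glt_ngle hxy) => hzx.
exact: gle_trans hyz hzx.
Qed.

Lemma gle_lt_trans y x z : le x y -> glt le y z -> glt le x z.
Proof.
move=> hxy hyz; apply: ngle_glt; apply: contra (glt_ngle hyz) => hzx.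
exact: gle_trans hzx hxy.
Qed.

Lemma glt_addr2 z x y : glt le (x + z) (y + z) = glt le x y.
Proof.
rewrite /glt (inj_eq (addIr z)); congr (_ && _).
by apply/idP/idP => [/(gle_addr (- z))|]; [rewrite !addrK | apply: gle_addr].
Qed.

Lemma glt_add x y z w : glt le x y -> le z w -> glt le (x + z) (y + w).
Proof.
move=> hxy hzw; apply: (@glt_le_trans (y + z)); first by rewrite glt_addr2.
by rewrite ![y + _]addrC; apply: gle_addr.
Qed.

Lemma gle_lt_add x y z w : le x y -> glt le z w -> glt le (x + z) (y + w).
Proof. by move=> hxy hzw; rewrite addrC [y + _]addrC; apply: glt_add. Qed.

(* An ordered group has no 2-torsion; this gives mu(-1) = 0. *)
Lemma double_eq0 (x : G) : x + x = 0 -> x = 0.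
Proof.
move=> xx0; have := gle_total 0 x.
by case/orP=> h; have := gle_addr x h; rewrite add0r xx0 => h'; apply: gle_anti.
Qed.

Lemma foldl_gmin x s : foldl (gmin le) x s \in x :: s /\
  (forall y, y \in x :: s -> le (foldl (gmin le) x s) y).
Proof.
elim: s x => [|z s IH] x /=.
  by split=> [|y]; rewrite ?mem_head // inE => /eqP ->; apply: gle_refl.
have [min_in min_le] := IH (gmin le x z).
have [gmin_x gmin_z] : le (gmin le x z) x /\ le (gmin le x z) z.
  rewrite /gmin; case: ifP => hxz; split; rewrite ?gle_refl //.
  by case/orP: (gle_total x z) => //; rewrite hxz.
split.
  by move: min_in; rewrite !inE /gmin; case: ifP => _ /orP[/eqP ->|->]; rewrite ?eqxx ?orbT.
move=> y; rewrite !inE => /orP[/eqP ->|/orP[/eqP ->|ys]].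
- exact: gle_trans (min_le _ (mem_head _ _)) gmin_x.
- exact: gle_trans (min_le _ (mem_head _ _)) gmin_z.
- by apply: min_le; rewrite inE ys orbT.
Qed.

Lemma gminseq_eq s v : v \in s -> (forall y, y \in s -> le v y) -> gminseq le s = v.
Proof.
case: s => [//|x s] vs v_le /=; have [min_in min_le] := foldl_gmin x s.
by apply: gle_anti; [apply: min_le | apply: v_le].
Qed.

Lemma gminseq_gt s v : s != [::] -> (forall y, y \in s -> glt le v y) ->
  glt le v (gminseq le s).
Proof. by case: s => [//|x s] _ v_lt /=; apply: v_lt; have [] := foldl_gmin x s. Qed.

Lemma exists_max (T : eqType) (phi : T -> G) (s : seq T) : s != [::] ->
  exists2 b, b \in s & forall b', b' \in s -> le (phi b') (phi b).
Proof.
elim: s => [//|x s IH] _; have [-> | /IH [b bs b_max]] := eqVneq s [::].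
  by exists x; rewrite ?mem_head // => b'; rewrite inE => /eqP ->; apply: gle_refl.
case/orP: (gle_total (phi x) (phi b)) => hxb.
  by exists b; rewrite ?inE ?bs ?orbT // => b'; rewrite inE => /orP[/eqP ->|/b_max].
exists x; rewrite ?mem_head // => b'; rewrite inE => /orP[/eqP ->|/b_max hb'].
  exact: gle_refl.
exact: gle_trans hb' hxb.
Qed.

End OrderedGroup.

Section Valuation.
Variables (G : zmodType) (le : rel G) (F : fieldType) (mu : {poly F} -> G).
Hypotheses (og : ordered_group le) (kv : krull_valuation le mu).

Lemma muM p q : p != 0 -> q != 0 -> mu (p * q) = mu p + mu q.
Proof. by case: kv => mul _; apply: mul. Qed.

Lemma mu_ultra p q : p != 0 -> q != 0 -> p + q != 0 ->
  le (mu p) (mu (p + q)) || le (mu q) (mu (p + q)).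
Proof. by case: kv => _ ultra; apply: ultra. Qed.

Lemma mu1 : mu 1 = 0.
Proof. by apply/(@addrI _ (mu 1)); rewrite -muM ?oner_neq0 // mulr1 addr0. Qed.

Lemma muN p : p != 0 -> mu (- p) = mu p.
Proof.
have mu_N1 : mu (-1) = 0.
  by apply: (double_eq0 og); rewrite -muM ?oppr_eq0 ?oner_neq0 // mulrNN mulr1 mu1.
by move=> p0; rewrite -mulN1r muM ?oppr_eq0 ?oner_neq0 // mu_N1 add0r.
Qed.

Lemma mu_lt_add p q : p != 0 -> q != 0 -> glt le (mu p) (mu q) ->
  p + q != 0 /\ mu (p + q) = mu p.
Proof.
move=> p0 q0 pq_lt.
have pq0 : p + q != 0.
  by apply: contraTneq pq_lt => /eqP; rewrite addr_eq0 => /eqP ->; rewrite muN ?glt_irr.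
split=> //; apply: (gle_anti og).
  have := @mu_ultra (p + q) (- q) pq0; rewrite oppr_eq0 addrK muN // => /(_ q0 p0).
  by case/orP=> // hqp; move: (glt_ngle og pq_lt); rewrite hqp.
case/orP: (mu_ultra p0 q0 pq0) => // hq.
exact: (gle_trans og (glt_le pq_lt) hq).
Qed.

Lemma muCM x y : x != 0 -> y != 0 -> mu (x * y)%:P = mu x%:P + mu y%:P.
Proof. by move=> x0 y0; rewrite polyCM muM ?polyC_eq0. Qed.

Lemma mu_addC_min x y : x + y != 0 ->
  (x != 0 /\ le (mu x%:P) (mu (x + y)%:P)) \/ (y != 0 /\ le (mu y%:P) (mu (x + y)%:P)).
Proof.
have [-> | x0] := eqVneq x 0; first by rewrite add0r => y0; right; split; rewrite ?gle_refl.
have [-> | y0] := eqVneq y 0; first by rewrite addr0 => _; left; split; rewrite ?gle_refl.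
move=> xy0; have := @mu_ultra x%:P y%:P; rewrite -polyCD !polyC_eq0.
by case/(_ x0 y0 xy0)/orP; [left | right].
Qed.

Lemma mu_addC_le c k x y : x + y != 0 ->
  (x != 0 -> le c (mu x%:P + k)) -> (y != 0 -> le c (mu y%:P + k)) ->
  le c (mu (x + y)%:P + k).
Proof.
move=> /mu_addC_min [] [z0 hz] hx hy.
  exact: (gle_trans og (hx z0) (gle_addr og k hz)).
exact: (gle_trans og (hy z0) (gle_addr og k hz)).
Qed.

Lemma mu_addC_lt c k x y : x + y != 0 ->
  (x != 0 -> glt le c (mu x%:P + k)) -> (y != 0 -> glt le c (mu y%:P + k)) ->
  glt le c (mu (x + y)%:P + k).
Proof.
move=> /mu_addC_min [] [z0 hz] hx hy.
  exact: (glt_le_trans og (hx z0) (gle_addr og k hz)).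
exact: (glt_le_trans og (hy z0) (gle_addr og k hz)).
Qed.

Lemma mu_addC_eq k x y : x != 0 -> (y != 0 -> glt le (mu x%:P + k) (mu y%:P + k)) ->
  x + y != 0 /\ mu (x + y)%:P = mu x%:P.
Proof.
have [-> | y0] := eqVneq y 0; first by rewrite addr0.
move=> x0 /(_ isT); rewrite (glt_addr2 og) => xy_lt.
have := @mu_lt_add x%:P y%:P; rewrite -polyCD !polyC_eq0.
exact: (fun h => h x0 y0 xy_lt).
Qed.

End Valuation.

Section Truncation.
Variables (G : zmodType) (le : rel G) (F : fieldType) (mu : {poly F} -> G) (a : F).
Hypotheses (og : ordered_group le) (kv : krull_valuation le mu).
Local Notation m := (mu ('X - a%:P)).

(* The coefficients of p(x + a) are those of the expansion of p in x - a. *)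
Definition shifted (p : {poly F}) : {poly F} := p \Po ('X + a%:P).

Definition term (p : {poly F}) (i : nat) : G := mu ((shifted p)`_i)%:P + m *+ i.

Definition dominant (p : {poly F}) (v : G) (i1 : nat) : Prop :=
  [/\ (shifted p)`_i1 != 0, term p i1 = v,
      forall i, (shifted p)`_i != 0 -> le v (term p i) &
      forall i, (i1 < i)%N -> (shifted p)`_i != 0 -> glt le v (term p i)].

Lemma coef0_shifted p : (shifted p)`_0 = p.[a].
Proof. by rewrite /shifted -horner_coef0 horner_comp hornerD hornerX hornerC add0r. Qed.

Definition terms (p : {poly F}) : seq G :=
  [seq term p i | i <- iota 0 (size (shifted p)) & (shifted p)`_i != 0].

Lemma truncE p : trunc le mu a p = gminseq le (terms p).
Proof. by []. Qed.

Lemma trunc_min p i1 v : (shifted p)`_i1 != 0 -> term p i1 = v ->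
  (forall i, (shifted p)`_i != 0 -> le v (term p i)) -> trunc le mu a p = v.
Proof.
move=> nz_i1 term_i1 v_le; rewrite truncE; apply: (gminseq_eq og).
  apply/mapP; exists i1 => //; rewrite mem_filter nz_i1 mem_iota add0n /= ltnNge.
  by apply: contra nz_i1 => hsize; rewrite nth_default.
by move=> y /mapP [i]; rewrite mem_filter => /andP[nz_i _] ->; apply: v_le.
Qed.

Lemma trunc_gt p v : shifted p != 0 ->
  (forall i, (shifted p)`_i != 0 -> glt le v (term p i)) -> glt le v (trunc le mu a p).
Proof.
move=> p0 v_lt; rewrite truncE.
have lead_in : term p (size (shifted p)).-1 \in terms p.
  apply/mapP; exists (size (shifted p)).-1 => //.
  rewrite mem_filter mem_iota add0n /= prednK ?size_poly_gt0 // leqnn andbT.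
  by rewrite -lead_coefE lead_coef_eq0.
apply: (gminseq_gt og); first by apply: contraTneq lead_in => ->.
by move=> y /mapP [i]; rewrite mem_filter => /andP[nz_i _] ->; apply: v_lt.
Qed.

Lemma trunc_dominant p v i1 : dominant p v i1 -> trunc le mu a p = v.
Proof. by case=> nz_i1 term_i1 v_le _; apply: trunc_min term_i1 v_le. Qed.

Lemma dominant0_value p v : dominant p v 0 -> p.[a] != 0 /\ v = mu (p.[a])%:P.
Proof. by case; rewrite /term coef0_shifted mulr0n addr0 => ? <-. Qed.

(* Dominance at index 0 means every term of positive index exceeds v. *)
Lemma trunc_sub_value_gt (p : {poly F}) v : (1 < size p)%N -> dominant p v 0 ->
  glt le v (trunc le mu a (p - (p.[a])%:P)).
Proof.
move=> hp [_ _ _ v_lt].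
have shiftE : shifted (p - (p.[a])%:P) = shifted p - (p.[a])%:P.
  by rewrite /shifted comp_polyB comp_polyC.
have coefE i : (shifted (p - (p.[a])%:P))`_i = if i is j.+1 then (shifted p)`_i else 0.
  by rewrite shiftE coefB coefC; case: i => [|j] /=; rewrite ?coef0_shifted ?subrr ?subr0.
apply: trunc_gt => [|[|j]]; rewrite ?coefE ?eqxx //.
  rewrite comp_poly2_eq0 ?size_XaddC // subr_eq0; apply: contraTneq hp => ->.
  by rewrite -leqNgt size_polyC_leq1.
by move=> nz_j; rewrite /term coefE; apply: v_lt.
Qed.

Lemma dominant_const c : c != 0 -> dominant c%:P (mu c%:P) 0.
Proof.
move=> c0; rewrite /dominant /term /shifted comp_polyC; split.
- by rewrite coefC.
- by rewrite coefC mulr0n addr0.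
- by case=> [|i]; rewrite coefC /= ?mulr0n ?addr0 ?eqxx // => _; apply: gle_refl.
- by case=> [|i] //; rewrite coefC /= eqxx.
Qed.

Lemma XsubC_shift b : 'X - b%:P = ('X - a%:P) + (a - b)%:P.
Proof. by rewrite polyCB addrA subrK. Qed.

Lemma mu_XsubC_far b : glt le (mu ('X - b%:P)) m ->
  a - b != 0 /\ mu (a - b)%:P = mu ('X - b%:P).
Proof.
move=> far; have Xa0 : 'X - a%:P != 0 by rewrite polyXsubC_eq0.
have d0 : a - b != 0.
  by apply: contraTneq far => d0; rewrite XsubC_shift d0 addr0 glt_irr.
have d_lt : glt le (mu (a - b)%:P) m.
  apply: (ngle_glt og); apply: contra (glt_ngle og far) => m_le.
  have := @mu_ultra _ _ _ _ kv ('X - a%:P) (a - b)%:P Xa0.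
  rewrite -XsubC_shift polyC_eq0 polyXsubC_eq0 => /(_ d0 isT) /orP[] // hd.
  exact: (gle_trans og m_le hd).
split=> //; have := @mu_lt_add _ _ _ _ og kv (a - b)%:P ('X - a%:P).
by rewrite [(a - b)%:P + _]addrC -XsubC_shift polyC_eq0 => /(_ d0 Xa0 d_lt) [].
Qed.

Lemma mu_XsubC_close b : ~~ glt le (mu ('X - b%:P)) m -> a - b != 0 ->
  le m (mu (a - b)%:P).
Proof.
move=> not_far d0; apply: contraR not_far => /(ngle_glt og) d_lt.
have := @mu_lt_add _ _ _ _ og kv (a - b)%:P ('X - a%:P).
rewrite [(a - b)%:P + _]addrC -XsubC_shift polyC_eq0 polyXsubC_eq0 => /(_ d0 isT d_lt) [_ ->].
exact: d_lt.
Qed.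

Lemma coef_shifted_mulXsubC p b i : (shifted (p * ('X - b%:P)))`_i =
  (shifted p)`_i * (a - b) + (if i is j.+1 then (shifted p)`_j else 0).
Proof.
have -> : shifted (p * ('X - b%:P)) = shifted p * 'X + shifted p * (a - b)%:P.
  by rewrite /shifted comp_polyM comp_polyB comp_polyX comp_polyC -mulrDr polyCB addrA.
by rewrite coefD coefMX coefMC addrC; case: i.
Qed.

Lemma term_mul_coef p i d : (shifted p)`_i * d != 0 ->
  mu ((shifted p)`_i * d)%:P + m *+ i = term p i + mu d%:P.
Proof. by rewrite mulf_eq0 negb_or => /andP[? ?]; rewrite (muCM kv) // addrAC. Qed.

Lemma term_succ p j : mu ((shifted p)`_j)%:P + m *+ j.+1 = term p j + m.
Proof. by rewrite mulrSr addrA. Qed.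

Lemma dominant_mul_far p v i1 b : dominant p v i1 -> glt le (mu ('X - b%:P)) m ->
  dominant (p * ('X - b%:P)) (v + mu ('X - b%:P)) i1.
Proof.
move=> [nz_i1 term_i1 v_le v_lt] far; have [d0 mu_d] := mu_XsubC_far far.
set e := mu ('X - b%:P) in far mu_d *; set h := shifted p in nz_i1 v_le v_lt.
have scaled i : h`_i * (a - b) != 0 -> mu (h`_i * (a - b))%:P + m *+ i = term p i + e.
  by move=> nz; rewrite term_mul_coef // mu_d.
have scaled_nz i : h`_i * (a - b) != 0 -> h`_i != 0.
  by apply: contraNneq => ->; rewrite mul0r.
have prev_gt i : (if i is j.+1 then h`_j else 0) != 0 ->
    glt le (v + e) (mu (if i is j.+1 then h`_j else 0)%:P + m *+ i).
  case: i => [|j]; rewrite ?eqxx // => nz_j.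
  by rewrite term_succ; apply: (gle_lt_add og (v_le j nz_j) far).
have [nz_new mu_new] : h`_i1 * (a - b) + (if i1 is j.+1 then h`_j else 0) != 0 /\
    mu (h`_i1 * (a - b) + (if i1 is j.+1 then h`_j else 0))%:P = mu (h`_i1 * (a - b))%:P.
  apply: (mu_addC_eq og kv (k := m *+ i1)) => [|nz]; first by rewrite mulf_neq0.
  by rewrite scaled ?mulf_neq0 // term_i1; apply: prev_gt.
split=> [||i|i lt_i]; rewrite /term ?coef_shifted_mulXsubC -/h //.
- by rewrite mu_new scaled ?mulf_neq0 // term_i1.
- move=> nz_i; apply: (mu_addC_le og kv) => // [nz|/prev_gt/glt_le //].
  by rewrite scaled //; apply: gle_addr => //; apply: v_le; apply: scaled_nz.
- move=> nz_i; apply: (mu_addC_lt og kv) => // [nz|/prev_gt //].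
  by rewrite scaled // (glt_addr2 og); apply: v_lt => //; apply: scaled_nz.
Qed.

Lemma dominant_mul_close p v i1 b : dominant p v i1 -> mu ('X - b%:P) = m ->
  dominant (p * ('X - b%:P)) (v + m) i1.+1.
Proof.
move=> [nz_i1 term_i1 v_le v_lt] close; set h := shifted p in nz_i1 v_le v_lt.
have mu_d : a - b != 0 -> le m (mu (a - b)%:P).
  by apply: mu_XsubC_close; rewrite close glt_irr.
have nz_factors i : h`_i * (a - b) != 0 -> h`_i != 0 /\ a - b != 0.
  by rewrite mulf_eq0 negb_or => /andP[].
have scaled_ge i : h`_i * (a - b) != 0 -> le (v + m) (mu (h`_i * (a - b))%:P + m *+ i).
  move=> nz; have [nz_i d0] := nz_factors i nz.
  by rewrite term_mul_coef //; apply: (gle_add og (v_le i nz_i) (mu_d d0)).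
have scaled_gt i : (i1 < i)%N -> h`_i * (a - b) != 0 ->
    glt le (v + m) (mu (h`_i * (a - b))%:P + m *+ i).
  move=> lt_i nz; have [nz_i d0] := nz_factors i nz.
  by rewrite term_mul_coef //; apply: (glt_add og (v_lt i lt_i nz_i) (mu_d d0)).
have [nz_new mu_new] : h`_i1.+1 * (a - b) + h`_i1 != 0 /\
    mu (h`_i1.+1 * (a - b) + h`_i1)%:P = mu (h`_i1)%:P.
  rewrite addrC; apply: (mu_addC_eq og kv (k := m *+ i1.+1)) => // nz.
  by rewrite term_succ term_i1; apply: scaled_gt.
split=> [||i|i lt_i]; rewrite /term ?coef_shifted_mulXsubC -/h //.
- by rewrite mu_new term_succ term_i1.
- move=> nz_i; apply: (mu_addC_le og kv) => //; first exact: scaled_ge.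
  case: i {nz_i} => [|j]; rewrite ?eqxx // => nz_j.
  by rewrite term_succ; apply: gle_addr => //; apply: v_le.
- move=> nz_i; apply: (mu_addC_lt og kv) => // [nz|].
    by apply: scaled_gt => //; apply: ltnW.
  case: i lt_i {nz_i} => [|j] // lt_j nz_j.
  by rewrite term_succ (glt_addr2 og); apply: v_lt.
Qed.

Lemma dominant_prod c s : c != 0 -> (forall b, b \in s -> le (mu ('X - b%:P)) m) ->
  dominant (c%:P * \prod_(b <- s) ('X - b%:P)) (mu (c%:P * \prod_(b <- s) ('X - b%:P)))
    (count (fun b => ~~ glt le (mu ('X - b%:P)) m) s).
Proof.
move=> c0; elim: s => [|b s IH] s_le; first by rewrite big_nil mulr1; apply: dominant_const.
have p0 : c%:P * \prod_(z <- s) ('X - z%:P) != 0.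
  by rewrite mulf_neq0 ?polyC_eq0 ?monic_neq0 ?monic_prod_XsubC.
have IHs := IH (fun z zs => s_le z (@mem_behead _ (b :: s) z zs)).
rewrite big_cons mulrCA (mulrC ('X - b%:P)) (muM kv) ?polyXsubC_eq0 //=.
have [far | not_far] := boolP (glt le (mu ('X - b%:P)) m).
  by rewrite add0n; apply: dominant_mul_far.
have close := gle_nglt_eq og (s_le b (mem_head b s)) not_far.
by rewrite add1n close; apply: dominant_mul_close.
Qed.

End Truncation.

Section ClosedField.
Variables (G : zmodType) (le : rel G) (F : closedFieldType) (mu : {poly F} -> G).
Hypotheses (og : ordered_group le) (kv : krull_valuation le mu).

Lemma poly_split (p : {poly F}) : p != 0 -> exists s : seq F,
  p = (lead_coef p)%:P * \prod_(z <- s) ('X - z%:P) /\ forall z, root p z = (z \in s).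
Proof.
move=> p0; have [s pE] := closed_field_poly_normal p.
exists s; split; first by rewrite mul_polyC.
by move=> z; rewrite pE rootZ ?lead_coef_eq0 // root_prod_XsubC.
Qed.

Lemma delta_exists (g : {poly F}) : (1 < size g)%N -> exists d, is_delta le mu g d.
Proof.
move=> hg; have g0 : g != 0 by rewrite -size_poly_gt0 (ltn_trans _ hg).
have [s [gE rootE]] := poly_split g0.
have s_nil : s != [::].
  apply: contraTneq hg => s0; rewrite gE s0 big_nil mulr1 size_polyC.
  by rewrite -leqNgt leq_b1.
have [bm bm_in bm_max] := exists_max og (fun z => mu ('X - z%:P)) s_nil.
exists (mu ('X - bm%:P)); split; first by exists bm; rewrite rootE.
by move=> z; rewrite rootE; apply: bm_max.
Qed.

Lemma dominant_of_roots a p : p != 0 ->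
  (forall b, root p b -> le (mu ('X - b%:P)) (mu ('X - a%:P))) ->
  exists i1, dominant le mu a p (mu p) i1.
Proof.
move=> p0 roots_le; have [s [pE rootE]] := poly_split p0.
rewrite pE; eexists; apply: (dominant_prod og kv); first by rewrite lead_coef_eq0.
by move=> b; rewrite -rootE; apply: roots_le.
Qed.

Lemma dominant0_of_roots a p : p != 0 ->
  (forall b, root p b -> glt le (mu ('X - b%:P)) (mu ('X - a%:P))) ->
  dominant le mu a p (mu p) 0.
Proof.
move=> p0 roots_lt; have [s [pE rootE]] := poly_split p0.
have no_close : count (fun b => ~~ glt le (mu ('X - b%:P)) (mu ('X - a%:P))) s = 0%N.
  by rewrite (@eq_in_count _ _ pred0) ?count_pred0 // => b; rewrite -rootE => /roots_lt ->.
rewrite pE -no_close; apply: (dominant_prod og kv); first by rewrite lead_coef_eq0.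
by move=> b; rewrite -rootE => /roots_lt /glt_le.
Qed.

End ClosedField.

Theorem lemma2p12 (F : closedFieldType) (G : zmodType) (le : rel G)
    (mu : {poly F} -> G) :
  ordered_group le -> krull_valuation le mu ->
  (forall (f g : {poly F}) (a : F),
     (1 < size f)%N -> optimizing_root le mu f a ->
     (1 < size g)%N ->
     (forall dg df : G, is_delta le mu g dg -> is_delta le mu f df -> glt le dg df) ->
     [/\ g.[a] != 0,
         trunc le mu a g = mu g,
         mu g = mu (g.[a])%:P,
         trunc le mu a ((g.[a])^-1 *: g) = 0 &
         glt le 0 (trunc le mu a ((g.[a])^-1 *: g - 1))]) /\
  (forall (K : {pred F}) (Q : {poly F}) (a : F),
     divring_closed K ->
     (forall z : F, exists p : {poly F}, [/\ p != 0, p \is a polyOver K & root p z]) ->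
     key_poly K le mu Q ->
     optimizing_root le mu Q a ->
     trunc le mu a Q = mu Q).
Proof.
move=> og kv; split.
- move=> f g a _ [_ delta_f] hg delta_lt.
  have g0 : g != 0 by rewrite -size_poly_gt0 (ltn_trans _ hg).
  have [dg delta_g] := delta_exists mu og hg.
  have roots_far b : root g b -> glt le (mu ('X - b%:P)) (mu ('X - a%:P)).
    by move=> gb; apply: (gle_lt_trans og (delta_g.2 b gb) (delta_lt _ _ delta_g delta_f)).
  have dom_g := dominant0_of_roots og kv g0 roots_far.
  have [ga0 mu_g] := dominant0_value dom_g.
  set q := g.[a]^-1 *: g.
  have q0 : q != 0 by rewrite scaler_eq0 negb_or invr_eq0 ga0.
  have dom_q : dominant le mu a q (mu q) 0.
    by apply: (dominant0_of_roots og kv q0) => b; rewrite rootZ ?invr_eq0 //; apply: roots_far.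
  have qa : q.[a] = 1 by rewrite hornerZ mulVf.
  have mu_q : mu q = 0 by have [_ ->] := dominant0_value dom_q; rewrite qa (mu1 kv).
  split=> //; first exact: (trunc_dominant og dom_g).
    by rewrite (trunc_dominant og dom_q).
  have := trunc_sub_value_gt og _ dom_q; rewrite qa mu_q; apply.
  by rewrite size_scale ?invr_eq0.
- move=> K Q a _ _ [monQ _] [_ [_ delta_Q]].
  have [i1 dom_Q] := dominant_of_roots og kv (monic_neq0 monQ) delta_Q.
  exact: (trunc_dominant og dom_Q).
Qed.
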